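(* Let $c:\mathbb{T}\to[0,1]$ and $\epsilon>0$. Then there exist $r\in[0,1]$ and an increasing sequence $\mu_i$ ($i<\infty$) of elements of $\mathbb{A}$ such that $|c(\mu_i)-r|<\epsilon$ for all $i$, and $|c(\mu_i\,\hat{}\,\mu_j)-r|<\epsilon$ for all $i<j$.
   Context: For $a,b\subseteq(0,1]$ put $a\,\hat{}\,b=\tfrac12 a\cup\tfrac12(b+1)$. $\mathbb{T}$ is the set of finite subsets of $(0,1]$ generated from $\mathbf{1}=\{1\}$ by $\hat{}$; $(\mathbb{T},\hat{},\mathbf{1})$ is the free binary system on one generator. For $t\in\mathbb{T}$, $\#(t)$ is its cardinality, and $\mathbb{T}_n=\{t\in\mathbb{T}:\#(t)=n\}$ (a finite set). $\mathbb{A}_n$ is the set of probability measures on $\mathbb{T}_n$ (convex combinations of elements of $\mathbb{T}_n$), $\mathbb{A}$ is the disjoint union of the $\mathbb{A}_n$, and $\#(\nu)=n$ for $\nu\in\mathbb{A}_n$. The operation $\hat{}$ extends bilinearly to $\mathbb{A}$: $(\mu\,\hat{}\,\nu)(E)=\sum_{a\hat{}b\in E}\mu(\{a\})\nu(\{b\})$. A function $c:\mathbb{T}\to\mathbb{R}$ is extended linearly to $\mathbb{A}$: $c(\nu)=\sum_t \nu(\{t\})c(t)$. A sequence $\mu_i$ in $\mathbb{A}$ is increasing if $i<j$ implies $\#(\mu_i)<\#(\mu_j)$. *)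

From Stdlib Require Import Reals List.
Import ListNotations.
Open Scope R_scope.

(* The free binary system on one generator: binary trees.
   [leaf] plays the role of 1 = {1}, [node a b] the role of a ^ b. *)
Inductive tree : Type :=
| leaf : tree
| node : tree -> tree -> tree.

(* #(t): the cardinality of t as a subset of (0,1]; #(1)=1 and
   #(a^b) = #(a)+#(b) since the two halves are disjoint. *)
Fixpoint card (t : tree) : nat :=
  match t with
  | leaf => 1%nat
  | node a b => (card a + card b)%nat
  end.

(* A finitely supported measure, given as a list of (point, weight) pairs;
   the measure of {t} is the sum of the weights attached to t. *)
Definition meas := list (tree * R).

Fixpoint total_weight (mu : meas) : R :=
  match mu with
  | [] => 0
  | p :: mu' => snd p + total_weight mu'
  end.

(* mu is a probability measure on T_n, i.e. an element of A_n. *)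
Definition in_A (n : nat) (mu : meas) : Prop :=
  Forall (fun p => card (fst p) = n /\ 0 <= snd p) mu /\ total_weight mu = 1.

(* Bilinear extension of ^ : (mu ^ nu)({a^b}) = mu({a}) nu({b}). *)
Definition hat (mu nu : meas) : meas :=
  flat_map (fun p => map (fun q => (node (fst p) (fst q), snd p * snd q)) nu) mu.

Fixpoint cext (c : tree -> R) (mu : meas) : R :=
  match mu with
  | [] => 0
  | p :: mu' => snd p * c (fst p) + cext c mu'
  end.

(* Let p = p + p be an idempotent nonprincipal ultrafilter on nat (Ellis–Numakura), and let
   x_n, y_n be trees of size n minimising, resp. maximising, c.  As x_n ^ x_m has size n + m,
   c(x_n ^ x_m) >= c(x_(n+m)), and idempotence makes the iterated p-limit of c(x_(n+m)) equal
   to the p-limit a_x of c(x_n); hence a_x <= b_xx, the iterated p-limit of c(x_n ^ x_m), and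
   dually b_yy <= a_y.  By the intermediate value theorem some mixture
   nu_n = (1-l) x_n + l y_n has iterated pair limit equal to its own limit r, and choosing the
   terms of the sequence one by one, each p-generically over the earlier ones, attains both
   limits within eps. *)

From Stdlib Require Import Reals List Lia Lra.
From Stdlib Require Import Classical ClassicalEpsilon FunctionalExtensionality PropExtensionality.
From mathcomp Require classical_sets filter boolp.
Import ListNotations.
Open Scope R_scope.

Local Notation ufilter := ((nat -> Prop) -> Prop).

Record proper_filter {X : Type} (P : (X -> Prop) -> Prop) : Prop := {
  filter_true : P (fun _ => True);
  filter_and : forall A B, P A -> P B -> P (fun x => A x /\ B x);
  filter_mono : forall A B : X -> Prop, (forall x, A x -> B x) -> P A -> P B;
  filter_not_false : ~ P (fun _ => False)
}.

Arguments filter_true {X P}.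
Arguments filter_and {X P} _ [A B].
Arguments filter_mono {X P} _ [A B].
Arguments filter_not_false {X P}.

Section ProperFilter.
Context {X : Type} {P : (X -> Prop) -> Prop} (HP : proper_filter P).

Lemma filter_inhabited A : P A -> exists x, A x.
Proof.
  intros HA. apply NNPP; intros Hn. apply (filter_not_false HP).
  apply (filter_mono HP (B := fun _ => False) (A := A)); auto.
  intros x Ax. apply Hn; eauto.
Qed.

Lemma filter_all (A : X -> Prop) : (forall x, A x) -> P A.
Proof. intros HA. apply (filter_mono HP (A := fun _ => True)); auto. apply HP. Qed.

Lemma filter_forall_in {I : Type} (l : list I) (A : I -> X -> Prop) :
  (forall i, In i l -> P (A i)) -> P (fun x => forall i, In i l -> A i x).
Proof.
  induction l as [|i0 l IH]; intros Hl.
  - apply filter_all. intros x i [].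
  - refine (filter_mono HP _ (filter_and HP (Hl i0 (or_introl eq_refl))
      (IH (fun i Hi => Hl i (or_intror Hi))))).
    intros x [H0 Hx] i [<-|Hi]; auto.
Qed.

End ProperFilter.

Lemma proper_filter_preimage {X Y : Type} (P : (X -> Prop) -> Prop) (f : X -> Y) :
  proper_filter P -> proper_filter (fun A : Y -> Prop => P (fun x => A (f x))).
Proof.
  intros HP. constructor.
  - apply HP.
  - intros A B; apply (filter_and HP).
  - intros A B AB; apply (filter_mono HP). intros x; apply AB.
  - apply HP.
Qed.

Definition flim {X : Type} (P : (X -> Prop) -> Prop) (f : X -> R) (a : R) : Prop :=
  forall e, 0 < e -> P (fun x => Rabs (f x - a) < e).

Section FilterLimits.
Context {X : Type} {P : (X -> Prop) -> Prop} (HP : proper_filter P).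

Lemma flim_ext (f g : X -> R) a : P (fun x => f x = g x) -> flim P f a -> flim P g a.
Proof.
  intros E H e He. refine (filter_mono HP _ (filter_and HP E (H e He))).
  intros x [<- h]; exact h.
Qed.

Lemma flim_plus (f g : X -> R) a b :
  flim P f a -> flim P g b -> flim P (fun x => f x + g x) (a + b).
Proof.
  intros Ha Hb e He. assert (He2 : 0 < e / 2) by lra.
  refine (filter_mono HP _ (filter_and HP (Ha _ He2) (Hb _ He2))).
  intros x [h1 h2]. apply Rabs_def2 in h1, h2. apply Rabs_def1; lra.
Qed.

Lemma flim_scal (f : X -> R) a k : flim P f a -> flim P (fun x => k * f x) (k * a).
Proof.
  intros Ha e He.
  assert (Hk : 0 < Rabs k + 1) by (pose proof (Rabs_pos k); lra).
  refine (filter_mono HP _ (Ha (e / (Rabs k + 1)) ltac:(apply Rdiv_lt_0_compat; lra))).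
  intros x h.
  replace (k * f x - k * a) with (k * (f x - a)) by ring. rewrite Rabs_mult.
  apply Rle_lt_trans with (Rabs k * (e / (Rabs k + 1))).
  - apply Rmult_le_compat_l; [apply Rabs_pos | lra].
  - apply Rlt_le_trans with ((Rabs k + 1) * (e / (Rabs k + 1))).
    + apply Rmult_lt_compat_r; [apply Rdiv_lt_0_compat |]; lra.
    + right; field; lra.
Qed.

Lemma flim_le (f g : X -> R) a b :
  P (fun x => f x <= g x) -> flim P f a -> flim P g b -> a <= b.
Proof.
  intros E Ha Hb. apply Rnot_lt_le; intros Hba.
  assert (He : 0 < (a - b) / 2) by lra.
  destruct (filter_inhabited HP _ (filter_and HP E (filter_and HP (Ha _ He) (Hb _ He))))
    as [x [h1 [h2 h3]]].
  apply Rabs_def2 in h2, h3. lra.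
Qed.

End FilterLimits.

Record ultra (p : ufilter) : Prop := {
  ultra_proper :> proper_filter p;
  ultra_dec : forall A, p A \/ p (fun n => ~ A n);
  ultra_tail : forall k, p (fun n => (k <= n)%nat)
}.

Lemma ultra_not p A : ultra p -> p (fun n => ~ A n) <-> ~ p A.
Proof.
  intros Hp; split.
  - intros H1 H2. apply (filter_not_false Hp).
    refine (filter_mono Hp _ (filter_and Hp H1 H2)). intros n []; tauto.
  - intros H1. destruct (ultra_dec p Hp A); tauto.
Qed.

Lemma ultra_ext p q : ultra p -> ultra q -> (forall A, p A -> q A) -> p = q.
Proof.
  intros Hp Hq Hpq. apply functional_extensionality; intros A.
  apply propositional_extensionality; split; auto.
  intros HA. apply NNPP; intros HnA.
  apply (ultra_not p A Hp), Hpq, (ultra_not q A Hq) in HnA. auto.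
Qed.

Lemma ultra_of_base (G : ufilter) :
  (forall A B, G A -> G B -> exists C, G C /\ forall n, C n -> A n /\ B n) ->
  (forall A, G A -> exists n, A n) ->
  (forall k, exists A, G A /\ forall n, A n -> (k <= n)%nat) ->
  exists p, ultra p /\ forall A, G A -> p A.
Proof.
  intros HI HN HK.
  set (F := fun B : nat -> Prop => exists A, G A /\ forall n, A n -> B n).
  assert (PF : filter.ProperFilter (F : classical_sets.set_system nat)).
  { apply filter.Build_ProperFilter_ex.
    - intros B [A [GA HA]]. destruct (HN A GA) as [n An]. eauto.
    - constructor.
      + destruct (HK 0%nat) as [A [GA _]]. exists A; split; auto. intros; exact I.
      + intros B1 B2 [A1 [G1 H1]] [A2 [G2 H2]].
        destruct (HI A1 A2 G1 G2) as [C [GC HC]]. exists C; split; auto.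
        intros n Cn. destruct (HC n Cn). split; auto.
      + intros B1 B2 B12 [A [GA HA]]. exists A; split; auto. }
  destruct (filter.ultraFilterLemma PF) as [W [UW FW]].
  assert (WF : filter.Filter W) by apply UW.
  exists W; split.
  - constructor; [constructor | |].
    + exact (@filter.filterT _ W WF).
    + intros A B; exact (@filter.filterI _ W WF A B).
    + intros A B; exact (@filter.filterS _ W WF A B).
    + exact (@filter.filter_not_empty _ W (@filter.ultra_proper _ W UW)).
    + intros A. exact (filter.in_ultra_setVsetC A UW).
    + intros k. destruct (HK k) as [A [GA HA]]. apply FW. exists A; split; auto.
  - intros A GA. apply FW. exists A; split; auto.
Qed.

Lemma ultra_exists : exists p, ultra p.
Proof.
  destruct (ultra_of_base (fun B => exists k, B = fun n => (k <= n)%nat)) as [p [Hp _]].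
  - intros A B [k1 ->] [k2 ->]. exists (fun n => (Nat.max k1 k2 <= n)%nat).
    split; [eauto | intros; lia].
  - intros A [k ->]. exists k; lia.
  - intros k. exists (fun n => (k <= n)%nat); split; eauto.
  - eauto.
Qed.

Definition pair_filter (p q : ufilter) (A : nat * nat -> Prop) : Prop :=
  p (fun n => q (fun m => A (n, m))).

Lemma pair_filter_proper p q :
  proper_filter p -> proper_filter q -> proper_filter (pair_filter p q).
Proof.
  intros Hp Hq. unfold pair_filter. constructor.
  - apply (filter_all Hp). intros; apply Hq.
  - intros A B HA HB. refine (filter_mono Hp _ (filter_and Hp HA HB)).
    intros n [a b]. apply (filter_and Hq a b).
  - intros A B AB HA. refine (filter_mono Hp _ HA). intros n.
    apply (filter_mono Hq). intros m; apply AB.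
  - intros H. apply (filter_not_false Hp).
    refine (filter_mono Hp _ H). intros n. apply (filter_not_false Hq).
Qed.

Lemma pair_filter_tail p q k :
  ultra p -> ultra q -> pair_filter p q (fun nm => (k <= fst nm)%nat /\ (k <= snd nm)%nat).
Proof.
  intros Hp Hq. refine (filter_mono Hp _ (ultra_tail p Hp k)). intros n hn.
  refine (filter_mono Hq _ (ultra_tail q Hq k)). intros m hm. simpl; auto.
Qed.

Definition ultra_sum (p q : ufilter) (A : nat -> Prop) : Prop :=
  pair_filter p q (fun nm => A (fst nm + snd nm)%nat).

Lemma ultra_sum_ultra p q : ultra p -> ultra q -> ultra (ultra_sum p q).
Proof.
  intros Hp Hq. pose proof (pair_filter_proper p q Hp Hq) as Hpq. constructor.
  - exact (proper_filter_preimage _ (fun nm => (fst nm + snd nm)%nat) Hpq).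
  - intros A. unfold ultra_sum, pair_filter.
    destruct (ultra_dec p Hp (fun n => q (fun m => A (n + m)%nat))) as [h|h]; [left; auto | right].
    refine (filter_mono Hp _ h). intros n hn. apply (ultra_not q _ Hq). auto.
  - intros k. refine (filter_mono Hpq _ (pair_filter_tail p q k Hp Hq)).
    intros nm [_ h]. lia.
Qed.

Lemma ultra_sum_assoc p q r : ultra_sum (ultra_sum p q) r = ultra_sum p (ultra_sum q r).
Proof.
  unfold ultra_sum, pair_filter; simpl.
  apply functional_extensionality; intro A.
  f_equal. apply functional_extensionality; intro n.
  f_equal. apply functional_extensionality; intro n'.
  f_equal. apply functional_extensionality; intro m.
  rewrite Nat.add_assoc; reflexivity.
Qed.

(* Closedness in the Stone topology: an ultrafilter containing every set common to [S]
   lies in [S]. *)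
Definition ultra_closed (S : ufilter -> Prop) : Prop :=
  forall r, ultra r -> (forall D, (forall q, S q -> q D) -> r D) -> S r.

Record closed_subsemigroup (S : ufilter -> Prop) : Prop := {
  sg_ultra : forall q, S q -> ultra q;
  sg_inhabited : exists q, S q;
  sg_closed : ultra_closed S;
  sg_sum : forall p q, S p -> S q -> S (ultra_sum p q)
}.

Lemma closed_subsemigroup_ultra : closed_subsemigroup ultra.
Proof.
  constructor; auto.
  - exact ultra_exists.
  - intros r Hr _; exact Hr.
  - apply ultra_sum_ultra.
Qed.

Lemma closed_subsemigroup_chain_inter (A : (ufilter -> Prop) -> Prop) :
  (forall S, A S -> closed_subsemigroup S) ->
  (forall S T, A S -> A T -> (forall q, S q -> T q) \/ (forall q, T q -> S q)) ->
  closed_subsemigroup (fun q => ultra q /\ forall S, A S -> S q).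
Proof.
  intros HA Hchain. constructor.
  - intros q [Hq _]; exact Hq.
  - destruct (classic (exists S, A S)) as [[S0 AS0] | nA].
    2: { destruct ultra_exists as [p Hp]. exists p; split; auto.
         intros S AS; exfalso; eauto. }
    (* compactness: the sets common to some member of the chain have the finite intersection
       property *)
    destruct (ultra_of_base (fun B => exists S, A S /\ forall q, S q -> q B)) as [p [Hp Gp]].
    + intros B1 B2 [S1 [A1 H1]] [S2 [A2 H2]]. exists (fun n => B1 n /\ B2 n).
      split; [| auto].
      cbv beta. destruct (Hchain S1 S2 A1 A2) as [h | h].
      * exists S1; split; auto. intros q Hq.
        apply (filter_and (sg_ultra S1 (HA S1 A1) q Hq)); [apply H1 | apply H2]; auto.
      * exists S2; split; auto. intros q Hq.
        apply (filter_and (sg_ultra S2 (HA S2 A2) q Hq)); [apply H1 | apply H2]; auto.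
    + intros B [S [AS HS]]. destruct (sg_inhabited S (HA S AS)) as [q Sq].
      exact (filter_inhabited (sg_ultra S (HA S AS) q Sq) B (HS q Sq)).
    + intros k. exists (fun n => (k <= n)%nat). split; auto.
      exists S0; split; auto. intros q Sq. exact (ultra_tail q (sg_ultra S0 (HA S0 AS0) q Sq) k).
    + exists p; split; auto. intros S AS. apply (sg_closed S (HA S AS)); auto.
      intros D HD. apply Gp. eauto.
  - intros r Hr Hc. split; auto. intros S AS. apply (sg_closed S (HA S AS)); auto.
    intros D HD. apply Hc. intros q [_ Hq]. exact (HD q (Hq S AS)).
  - intros p q [Hp Ap] [Hq Aq]. split; [apply ultra_sum_ultra; auto |].
    intros S AS. apply (sg_sum S (HA S AS)); [apply Ap | apply Aq]; exact AS.
Qed.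

Lemma minimal_closed_subsemigroup : exists S, closed_subsemigroup S /\
  forall T, closed_subsemigroup T -> (forall q, T q -> S q) -> forall q, S q -> T q.
Proof.
  set (R := fun a b : {S | closed_subsemigroup S} =>
    boolp.asbool (forall q, proj1_sig b q -> proj1_sig a q)).
  assert (RP : forall a b, R a b = true <-> (forall q, proj1_sig b q -> proj1_sig a q)).
  { intros a b. symmetry. apply Bool.reflect_iff, boolp.asboolP. }
  destruct (classical_sets.ZL_preorder (exist _ ultra closed_subsemigroup_ultra) (R := R))
    as [t Ht].
  - intros t; apply RP; auto.
  - intros a b d Hab Hbd. apply RP. intros q Hq. apply (proj1 (RP _ _) Hab).
    exact (proj1 (RP _ _) Hbd q Hq).
  - intros C Htot.
    assert (Hinter : closed_subsemigroup (fun q => ultra q /\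
      forall S, (exists s, C s /\ proj1_sig s = S) -> S q)).
    { apply closed_subsemigroup_chain_inter.
      - intros S [s [_ <-]]. exact (proj2_sig s).
      - intros S T [s [Cs <-]] [u [Cu <-]].
        destruct (Htot s u Cs Cu) as [h | h]; [right | left]; exact (proj1 (RP _ _) h). }
    exists (exist _ _ Hinter).
    intros s Cs. apply RP. intros q [_ Hq]. apply Hq. eauto.
  - exists (proj1_sig t); split; [exact (proj2_sig t) |].
    intros T HT HTt.
    exact (proj1 (RP _ _) (Ht (exist _ T HT) (proj2 (RP t (exist _ T HT)) HTt))).
Qed.

Lemma ultra_closed_translate S p : (forall q, S q -> ultra q) -> ultra_closed S -> ultra p ->
  ultra_closed (fun r => exists q, S q /\ r = ultra_sum q p).
Proof.
  intros SU HS Hp r Hr Hc.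
  set (shift A n := p (fun m => A (n + m)%nat)).
  (* [r = q + p] for any ultrafilter [q] through the sets [shift A /\ D] with [A] in [r]
     and [D] common to [S] *)
  destruct (ultra_of_base (fun B => exists A D, r A /\ (forall q, S q -> q D) /\
      B = fun n => shift A n /\ D n)) as [q [Hq Gq]].
  - intros B1 B2 [A1 [D1 [r1 [c1 ->]]]] [A2 [D2 [r2 [c2 ->]]]].
    exists (fun n => shift (fun m => A1 m /\ A2 m) n /\ (D1 n /\ D2 n)). split.
    + exists (fun n => A1 n /\ A2 n), (fun n => D1 n /\ D2 n).
      split; [apply (filter_and Hr); auto | split; auto].
      intros q Sq. apply (filter_and (SU q Sq)); [apply c1 | apply c2]; exact Sq.
    + intros n [h [d1 d2]]. unfold shift in *.
      split; split; auto; refine (filter_mono Hp _ h); intros m [a b]; auto.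
  - intros B [A [D [rA [cD ->]]]]. apply NNPP; intros Hn.
    apply (ultra_not r A Hr); auto. apply Hc. intros r' [q [Sq ->]].
    refine (filter_mono (SU q Sq) _ (cD q Sq)). intros n Dn.
    apply (ultra_not p _ Hp). intros h. apply Hn. exists n; split; auto.
  - intros k. exists (fun n => shift (fun _ => True) n /\ (k <= n)%nat). split.
    + exists (fun _ => True), (fun n => (k <= n)%nat).
      split; [apply Hr | split; auto].
      intros q Sq. exact (ultra_tail q (SU q Sq) k).
    + intros n [_ h]; exact h.
  - exists q. split.
    + apply HS; auto. intros D HD.
      refine (filter_mono Hq _ (Gq _ _)).
      2: { exists (fun _ => True), D. split; [apply Hr | split; [exact HD | reflexivity]]. }
      intros n [_ h]; exact h.
    + apply ultra_ext; auto. apply ultra_sum_ultra; auto.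
      intros A rA. refine (filter_mono Hq _ (Gq _ _)).
      2: { exists A, (fun _ => True).
           split; [exact rA | split; [intros q' Sq'; apply (SU q' Sq') | reflexivity]]. }
      intros n [h _]; exact h.
Qed.

Lemma closed_subsemigroup_translate S p : closed_subsemigroup S -> S p ->
  closed_subsemigroup (fun r => exists q, S q /\ r = ultra_sum q p).
Proof.
  intros HS Sp. pose proof (sg_ultra S HS) as SU. constructor.
  - intros r [q [Sq ->]]. apply ultra_sum_ultra; auto.
  - exists (ultra_sum p p), p; auto.
  - exact (ultra_closed_translate S p SU (sg_closed S HS) (SU p Sp)).
  - intros r1 r2 [q1 [S1 ->]] [q2 [S2 ->]].
    exists (ultra_sum (ultra_sum q1 p) q2). split.
    + apply (sg_sum S HS); [apply (sg_sum S HS) |]; auto.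
    + rewrite !ultra_sum_assoc. reflexivity.
Qed.

Lemma closed_subsemigroup_stabilizer S p : closed_subsemigroup S -> ultra p ->
  (exists q, S q /\ ultra_sum q p = p) ->
  closed_subsemigroup (fun q => S q /\ ultra_sum q p = p).
Proof.
  intros HS Hp Hq0. constructor.
  - intros q [Sq _]. exact (sg_ultra S HS q Sq).
  - exact Hq0.
  - intros r Hr Hc. split.
    + apply (sg_closed S HS); auto. intros D HD. apply Hc. intros q [Sq _]; exact (HD q Sq).
    + symmetry. apply ultra_ext; auto. apply ultra_sum_ultra; auto.
      intros B pB. apply Hc. intros q [_ E]. rewrite <- E in pB. exact pB.
  - intros q1 q2 [S1 E1] [S2 E2]. split; [apply (sg_sum S HS); auto |].
    rewrite ultra_sum_assoc, E2, E1. reflexivity.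
Qed.

(* Ellis–Numakura: a minimal closed subsemigroup [S] satisfies [S + p = S] and then
   [{q in S | q + p = p} = S] for any [p] in [S]. *)
Lemma idempotent_ultra_exists : exists p, ultra p /\ ultra_sum p p = p.
Proof.
  destruct minimal_closed_subsemigroup as [S [HS Smin]].
  destruct (sg_inhabited S HS) as [p Sp].
  pose proof (sg_ultra S HS p Sp) as Hp.
  assert (Hfix : exists q, S q /\ ultra_sum q p = p).
  { destruct (Smin _ (closed_subsemigroup_translate S p HS Sp)) with p as [q [Sq E]]; auto.
    - intros r [q [Sq ->]]. apply (sg_sum S HS); auto.
    - exists q; auto. }
  destruct (Smin _ (closed_subsemigroup_stabilizer S p HS Hp Hfix)) with p as [_ E]; auto.
  - intros q [Sq _]; exact Sq.
  - exists p; auto.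
Qed.

Lemma ultra_flim_exists p (f : nat -> R) lo hi : ultra p ->
  (forall n, lo <= f n <= hi) -> exists a, flim p f a /\ lo <= a <= hi.
Proof.
  intros Hp Hf.
  (* the limit is the supremum of the [x] lying eventually below [f] *)
  set (E := fun x => p (fun n => x <= f n)).
  assert (E_hi : forall x, E x -> x <= hi).
  { intros x Ex. apply Rnot_lt_le; intros Hx. apply (filter_not_false Hp).
    refine (filter_mono Hp _ Ex). intros n hn. destruct (Hf n); lra. }
  assert (E_lo : E lo) by (apply (filter_all Hp); intros n; apply Hf).
  destruct (completeness E (ex_intro _ hi E_hi) (ex_intro _ lo E_lo)) as [a [ub lub]].
  exists a; split; [| split; [apply ub, E_lo | apply lub; exact E_hi]].
  intros e He.
  assert (A1 : p (fun n => a - e < f n)).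
  { apply NNPP; intros hn. assert (a <= a - e); [| lra].
    apply lub. intros x Ex. apply Rnot_lt_le; intros h. apply hn.
    refine (filter_mono Hp _ Ex). intros n hn'; lra. }
  assert (A2 : p (fun n => f n < a + e)).
  { destruct (ultra_dec p Hp (fun n => f n < a + e)) as [h | h]; auto.
    assert (E (a + e)); [| assert (a + e <= a) by (apply ub; auto); lra].
    refine (filter_mono Hp _ h). intros n hn; lra. }
  refine (filter_mono Hp _ (filter_and Hp A1 A2)).
  intros n [h1 h2]. apply Rabs_def1; lra.
Qed.

Lemma pair_flim_exists p q (F : nat * nat -> R) lo hi : ultra p -> ultra q ->
  (forall nm, lo <= F nm <= hi) -> exists b, flim (pair_filter p q) F b /\ lo <= b <= hi.
Proof.
  intros Hp Hq HF.
  destruct (choice (fun n a => flim q (fun m => F (n, m)) a /\ lo <= a <= hi)) as [L HL].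
  { intros n. apply ultra_flim_exists; auto. }
  destruct (ultra_flim_exists p L lo hi Hp (fun n => proj2 (HL n))) as [b [Hb Bb]].
  exists b; split; auto. intros e He.
  refine (filter_mono Hp _ (Hb (e / 2) ltac:(lra))). intros n hn.
  refine (filter_mono Hq _ (proj1 (HL n) (e / 2) ltac:(lra))). intros m hm.
  apply Rabs_def2 in hn, hm. apply Rabs_def1; simpl; lra.
Qed.

Lemma flim_pair_sum p (f : nat -> R) a : ultra_sum p p = p ->
  flim p f a -> flim (pair_filter p p) (fun nm => f (fst nm + snd nm)%nat) a.
Proof. intros Hid Hf e He. pose proof (Hf e He) as H. rewrite <- Hid in H. exact H. Qed.

Fixpoint history (pick : list nat -> nat) (i : nat) : list nat :=
  match i with
  | O => []
  | S i' => pick (history pick i') :: history pick i'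
  end.

Lemma in_history pick i j : (i < j)%nat -> In (pick (history pick i)) (history pick j).
Proof.
  induction j as [|j IH]; intros Hij; [lia |].
  destruct (Nat.eq_dec i j) as [-> | ne]; [left; reflexivity | right; apply IH; lia].
Qed.

(* Each new term is chosen [p]-generically given all earlier ones, which keeps every
   earlier section [Q (m, _)] in [p]. *)
Lemma ultra_increasing_selection p (G : nat -> Prop) (Q : nat * nat -> Prop) :
  ultra p -> p G -> pair_filter p p Q ->
  exists nn : nat -> nat, (forall i j, (i < j)%nat -> (nn i < nn j)%nat) /\
    (forall i, G (nn i)) /\ (forall i j, (i < j)%nat -> Q (nn i, nn j)).
Proof.
  intros Hp HG HQ.
  set (good hs n := (G n /\ p (fun m => Q (n, m))) /\
                    forall m, In m hs -> (m < n)%nat /\ Q (m, n)).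
  destruct (choice (fun hs n => (forall m, In m hs -> p (fun k => Q (m, k))) -> good hs n))
    as [pick Hpick].
  { intros hs. destruct (classic (forall m, In m hs -> p (fun k => Q (m, k)))) as [h | h].
    - destruct (filter_inhabited Hp (good hs)) as [n Hn]; [| eauto].
      apply (filter_and Hp); [exact (filter_and Hp HG HQ) |].
      apply (filter_forall_in Hp hs (fun m n => (m < n)%nat /\ Q (m, n))).
      intros m Hm. exact (filter_and Hp (ultra_tail p Hp (S m)) (h m Hm)).
    - exists O; tauto. }
  assert (Hhist : forall j m, In m (history pick j) -> p (fun k => Q (m, k))).
  { induction j as [|j IH]; intros m Hm; [destruct Hm |].
    destruct Hm as [<- | Hm]; [apply (Hpick _ IH) | exact (IH m Hm)]. }
  assert (Hgood : forall j, good (history pick j) (pick (history pick j)))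
    by (intros j; apply Hpick, Hhist).
  exists (fun i => pick (history pick i)). split; [| split].
  - intros i j Hij. apply (Hgood j), in_history, Hij.
  - intros i. apply (Hgood i).
  - intros i j Hij. apply (Hgood j), in_history, Hij.
Qed.

(* [enum_trees k n] lists the trees of size [n] with fuel [k >= n]. *)
Fixpoint enum_trees (k n : nat) : list tree :=
  match k with
  | O => []
  | S k' => (if Nat.eqb n 1 then [leaf] else []) ++
      flat_map (fun i => flat_map (fun a => map (node a) (enum_trees k' (n - i)))
                                  (enum_trees k' i)) (seq 1 (n - 1))
  end.

Lemma card_pos t : (1 <= card t)%nat.
Proof. induction t; simpl; lia. Qed.

Lemma in_enum_trees t k : (card t <= k)%nat -> In t (enum_trees k (card t)).
Proof.
  revert k; induction t as [|a IHa b IHb]; intros k Hk.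
  - destruct k; simpl in *; [lia | left; reflexivity].
  - destruct k as [|k]; simpl in Hk; [pose proof (card_pos a); lia |].
    pose proof (card_pos a); pose proof (card_pos b).
    simpl. apply in_or_app; right. apply in_flat_map. exists (card a). split.
    + apply in_seq. lia.
    + apply in_flat_map. exists a. split; [apply IHa; lia |].
      apply in_map. replace (card a + card b - card a)%nat with (card b) by lia.
      apply IHb; lia.
Qed.

Lemma card_of_in_enum_trees k : forall n t, In t (enum_trees k n) -> card t = n.
Proof.
  induction k as [|k IH]; intros n t H; simpl in H; [contradiction |].
  apply in_app_or in H. destruct H as [H | H].
  - destruct (Nat.eqb_spec n 1); simpl in H; [| contradiction].
    destruct H as [<- | []]; simpl; auto.
  - apply in_flat_map in H. destruct H as [i [Hi H]]. apply in_seq in Hi.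
    apply in_flat_map in H. destruct H as [a [Ha H]]. apply in_map_iff in H.
    destruct H as [b [<- Hb]]. simpl. apply IH in Ha, Hb. lia.
Qed.

Lemma tree_of_card n : (1 <= n)%nat -> exists t, card t = n.
Proof.
  induction n as [|n IH]; intros Hn; [lia |].
  destruct (Nat.eq_dec n 0) as [-> | ne]; [exists leaf; reflexivity |].
  destruct IH as [t Ht]; [lia |]. exists (node leaf t). simpl; lia.
Qed.

Lemma list_argmin {A : Type} (g : A -> R) (l : list A) : l <> [] ->
  exists x, In x l /\ forall y, In y l -> g x <= g y.
Proof.
  induction l as [|a l IH]; intros Hl; [congruence |].
  destruct l as [|b l].
  - exists a; split; [left; auto |]. intros y [<- | []]; lra.
  - destruct IH as [x [Hx Hm]]; [congruence |].
    destruct (Rle_dec (g a) (g x)).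
    + exists a; split; [left; auto |]. intros y [<- | Hy]; [lra |]. specialize (Hm y Hy); lra.
    + exists x; split; [right; auto |]. intros y [<- | Hy]; [lra | auto].
Qed.

Lemma argmin_trees (g : tree -> R) : exists x : nat -> tree, forall n, (1 <= n)%nat ->
  card (x n) = n /\ forall u, card u = n -> g (x n) <= g u.
Proof.
  apply (choice (fun n t => (1 <= n)%nat -> card t = n /\ forall u, card u = n -> g t <= g u)).
  intros n. destruct (Compare_dec.le_lt_dec 1 n) as [Hn | Hn]; [| exists leaf; lia].
  destruct (list_argmin g (enum_trees n n)) as [x [Hx Hm]].
  - destruct (tree_of_card n Hn) as [t Ht]. intros E.
    pose proof (in_enum_trees t n) as H. rewrite Ht, E in H. apply H; lia.
  - exists x. intros _. split; [eapply card_of_in_enum_trees; eauto |].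
    intros u Hu. apply Hm. rewrite <- Hu. apply in_enum_trees. lia.
Qed.

Lemma extremal_trees (c : tree -> R) : exists x y : nat -> tree, forall n, (1 <= n)%nat ->
  card (x n) = n /\ card (y n) = n /\ forall u, card u = n -> c (x n) <= c u <= c (y n).
Proof.
  destruct (argmin_trees c) as [x Hx], (argmin_trees (fun t => - c t)) as [y Hy].
  exists x, y. intros n Hn. destruct (Hx n Hn) as [Cx Mx], (Hy n Hn) as [Cy My].
  split; [| split]; auto. intros u Hu. specialize (Mx u Hu). specialize (My u Hu). lra.
Qed.

Lemma mixing_weight (bxx bxy byx byy ax ay : R) : ax <= bxx -> byy <= ay ->
  exists l, 0 <= l <= 1 /\
    (1-l)*(1-l)*bxx + (1-l)*l*bxy + l*(1-l)*byx + l*l*byy = (1-l)*ax + l*ay.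
Proof.
  intros Hx Hy.
  set (g l := (1-l)*(1-l)*bxx + (1-l)*l*bxy + l*(1-l)*byx + l*l*byy - ((1-l)*ax + l*ay)).
  assert (Cg : continuity g) by (unfold g; reg).
  destruct (IVT_cor g 0 1 Cg ltac:(lra)) as [l [Hl gl]].
  - replace (g 0) with (bxx - ax) by (unfold g; ring).
    replace (g 1) with (byy - ay) by (unfold g; ring).
    assert (0 <= (bxx - ax) * (ay - byy)) by (apply Rmult_le_pos; lra). lra.
  - exists l. split; auto. unfold g in gl. lra.
Qed.

Definition two_point (s t : tree) (l : R) : meas := [(s, 1 - l); (t, l)].

Lemma in_A_two_point n s t l :
  card s = n -> card t = n -> 0 <= l <= 1 -> in_A n (two_point s t l).
Proof.
  intros Hs Ht Hl. split; [| simpl; ring].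
  repeat apply Forall_cons; try apply Forall_nil; simpl; split; auto; lra.
Qed.

Section TwoPointLimits.
Context {X : Type} {P : (X -> Prop) -> Prop} (HP : proper_filter P).
Variables (c : tree -> R) (l : R).

Lemma flim_two_point (s t : X -> tree) a b :
  flim P (fun x => c (s x)) a -> flim P (fun x => c (t x)) b ->
  flim P (fun x => cext c (two_point (s x) (t x) l)) ((1-l)*a + l*b).
Proof.
  intros Ha Hb. apply (flim_ext HP (fun x => (1-l) * c (s x) + l * c (t x))).
  - apply (filter_all HP). intros x. simpl. ring.
  - apply (flim_plus HP); apply (flim_scal HP); auto.
Qed.

Lemma flim_hat_two_point (s t s' t' : X -> tree) bss bst bts btt :
  flim P (fun x => c (node (s x) (s' x))) bss -> flim P (fun x => c (node (s x) (t' x))) bst ->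
  flim P (fun x => c (node (t x) (s' x))) bts -> flim P (fun x => c (node (t x) (t' x))) btt ->
  flim P (fun x => cext c (hat (two_point (s x) (t x) l) (two_point (s' x) (t' x) l)))
    ((1-l)*(1-l)*bss + (1-l)*l*bst + l*(1-l)*bts + l*l*btt).
Proof.
  intros Hss Hst Hts Htt.
  apply (flim_ext HP (fun x => (1-l)*(1-l) * c (node (s x) (s' x)) +
    (1-l)*l * c (node (s x) (t' x)) + l*(1-l) * c (node (t x) (s' x)) +
    l*l * c (node (t x) (t' x)))).
  - apply (filter_all HP). intros x. unfold hat, two_point. simpl. ring.
  - repeat apply (flim_plus HP); apply (flim_scal HP); auto.
Qed.

End TwoPointLimits.

Lemma extremal_node_bounds (c : tree -> R) (x y : nat -> tree) :
  (forall n, (1 <= n)%nat -> card (x n) = n /\ card (y n) = n /\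
     forall u, card u = n -> c (x n) <= c u <= c (y n)) ->
  forall nm : nat * nat, (1 <= fst nm)%nat /\ (1 <= snd nm)%nat ->
    c (x (fst nm + snd nm)%nat) <= c (node (x (fst nm)) (x (snd nm))) /\
    c (node (y (fst nm)) (y (snd nm))) <= c (y (fst nm + snd nm)%nat).
Proof.
  intros Hxy [n m] [Hn Hm]. simpl in *.
  destruct (Hxy n Hn) as [Cxn [Cyn _]], (Hxy m Hm) as [Cxm [Cym _]].
  destruct (Hxy (n + m)%nat ltac:(lia)) as [_ [_ Hext]].
  split; apply Hext; simpl; lia.
Qed.

Lemma realize_pair_limits (c : tree -> R) eps p (nu : nat -> meas) r :
  0 < eps -> ultra p -> (forall n, (1 <= n)%nat -> in_A n (nu n)) ->
  flim p (fun n => cext c (nu n)) r ->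
  flim (pair_filter p p) (fun nm => cext c (hat (nu (fst nm)) (nu (snd nm)))) r ->
  exists (n : nat -> nat) (mu : nat -> meas),
    (forall i, in_A (n i) (mu i)) /\
    (forall i j, (i < j)%nat -> (n i < n j)%nat) /\
    (forall i, Rabs (cext c (mu i) - r) < eps) /\
    (forall i j, (i < j)%nat -> Rabs (cext c (hat (mu i) (mu j)) - r) < eps).
Proof.
  intros Heps Hp HA Hsingle Hpair.
  destruct (ultra_increasing_selection p
    (fun n => (1 <= n)%nat /\ Rabs (cext c (nu n) - r) < eps)
    (fun nm => Rabs (cext c (hat (nu (fst nm)) (nu (snd nm))) - r) < eps) Hp)
    as [nn [Hinc [HG HQ]]].
  - exact (filter_and Hp (ultra_tail p Hp 1) (Hsingle eps Heps)).
  - exact (Hpair eps Heps).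
  - exists nn, (fun i => nu (nn i)). split; [| split; [exact Hinc | split]].
    + intros i. apply HA, HG.
    + intros i; apply HG.
    + exact HQ.
Qed.

Theorem theorem1p2 (c : tree -> R) (eps : R) :
  (forall t, 0 <= c t <= 1) -> 0 < eps ->
  exists r : R, 0 <= r <= 1 /\
    exists (n : nat -> nat) (mu : nat -> meas),
      (forall i, in_A (n i) (mu i)) /\
      (forall i j, (i < j)%nat -> (n i < n j)%nat) /\
      (forall i, Rabs (cext c (mu i) - r) < eps) /\
      (forall i j, (i < j)%nat -> Rabs (cext c (hat (mu i) (mu j)) - r) < eps).
Proof.
  intros Hc Heps.
  destruct idempotent_ultra_exists as [p [Hp Hid]].
  pose proof (pair_filter_proper p p Hp Hp) as Hpp.
  destruct (extremal_trees c) as [x [y Hxy]].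
  destruct (ultra_flim_exists p (fun n => c (x n)) 0 1 Hp) as [ax [Hax Bax]]; auto.
  destruct (ultra_flim_exists p (fun n => c (y n)) 0 1 Hp) as [ay [Hay Bay]]; auto.
  assert (Hlim2 : forall u v, exists b,
             flim (pair_filter p p) (fun nm => c (node (u (fst nm)) (v (snd nm)))) b).
  { intros u v.
    destruct (pair_flim_exists p p (fun nm => c (node (u (fst nm)) (v (snd nm)))) 0 1 Hp Hp)
      as [b [Hb _]]; eauto. }
  destruct (Hlim2 x x) as [bxx Hbxx], (Hlim2 x y) as [bxy Hbxy],
           (Hlim2 y x) as [byx Hbyx], (Hlim2 y y) as [byy Hbyy].
  pose proof (filter_mono Hpp (extremal_node_bounds c x y Hxy)
                (pair_filter_tail p p 1 Hp Hp)) as Hnode.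
  destruct (mixing_weight bxx bxy byx byy ax ay) as [l [Hl Hmix]].
  - refine (flim_le Hpp _ _ _ _ _ (flim_pair_sum p _ ax Hid Hax) Hbxx).
    refine (filter_mono Hpp _ Hnode). intros nm []; auto.
  - refine (flim_le Hpp _ _ _ _ _ Hbyy (flim_pair_sum p _ ay Hid Hay)).
    refine (filter_mono Hpp _ Hnode). intros nm []; auto.
  - exists ((1-l)*ax + l*ay). split; [nra |].
    apply (realize_pair_limits c eps p (fun n => two_point (x n) (y n) l)); auto.
    + intros n Hn. destruct (Hxy n Hn) as [Cx [Cy _]]. apply in_A_two_point; auto.
    + exact (flim_two_point Hp c l x y ax ay Hax Hay).
    + rewrite <- Hmix. exact (flim_hat_two_point Hpp c l (fun nm => x (fst nm))
        (fun nm => y (fst nm)) (fun nm => x (snd nm)) (fun nm => y (snd nm)) _ _ _ _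
        Hbxx Hbxy Hbyx Hbyy).
Qed.
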